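(* There exists a sequence $S\in\{0,1\}^\omega$ which is i.o. LZ-deep and FS-deep but not (a.e.) LZ-deep.
   Context: $S\upharpoonright n$ is the length-$n$ prefix of $S$. A finite-state transducer (FST) is $T=(Q,q_0,\delta,\nu)$ with finite state set $Q$, start state $q_0$, $\delta:Q\times\{0,1\}\to Q$, $\nu:Q\times\{0,1\}\to\{0,1\}^*$; $T(\lambda)=\lambda$, $T(xb)=T(x)\nu(\hat\delta(x),b)$; $T$ is an ILFST if $x\mapsto(T(x),\hat\delta(x))$ is injective. FSTs are described by the following fixed binary representation. For $n\ge1$, $\mathrm{bin}(n)$ is the binary representation of $n$ and $\mathrm{string}(n)$ is $\mathrm{bin}(n)$ without its leading 1. For $x=x_1\cdots x_l$, $x^\dagger=x_10x_20\cdots x_{l-1}0x_l1$, $x^\diamond=\overline{(1x)^\dagger}$ (bitwise complement), $d(x)=x_1x_1\cdots x_lx_l$. For an FST with states $q_1,\dots,q_m$, write for $t=2i-1+b$: $(\delta(q_i,b),\nu(q_i,b))=(q_{1+(n_t\bmod m)},\mathrm{string}(n'_t))$; the table is encoded as $\pi=\mathrm{bin}(n_1)^\ddagger\mathrm{string}(n'_1)^\diamond\cdots\mathrm{bin}(n_{2m})^\ddagger\mathrm{string}(n'_{2m})^\diamond$, where $\mathrm{bin}(n_t)^\ddagger$ is empty for a self-loop and $\mathrm{bin}(n_t)^\dagger$ otherwise; $d(\mathrm{bin}(i))01\pi$ describes that FST with start state $q_i$. $|T|$ is the shortest description length, $\mathrm{FST}^{\le k}=\{T:|T|\le k\}$,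 and $D^k(x)=\min\{|y|:T\in\mathrm{FST}^{\le k},T(y)=x\}$. $S$ is FS-deep if there is $\alpha>0$ such that for every $k$ there is $k'$ with $D^k(S\upharpoonright n)-D^{k'}(S\upharpoonright n)\ge\alpha n$ for infinitely many $n$. LZ denotes the Lempel–Ziv 78 compressor: it parses $x=x_1\cdots x_n$ into phrases, each distinct from all earlier ones (except possibly the last), with $x_i=x_{l(i)}b_i$, $l(i)<i$, $b_i\in\{0,1\}$, $x_0=\lambda$; it outputs $c_{l(1)}b_1\cdots c_{l(n)}b_n$ with $c_j$ a prefix-free encoding of index $j$. $S$ is (a.e.) LZ-deep if there is $\alpha>0$ such that for every ILFST $C$, $|C(S\upharpoonright n)|-|\mathrm{LZ}(S\upharpoonright n)|\ge\alpha n$ for all but finitely many $n$; $S$ is i.o. LZ-deep if there is $\alpha>0$ such that for every ILFST $C$ this inequality holds for infinitely many $n$. *)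

From mathcomp Require Import all_boot.
From Stdlib Require Import Reals.

Set Implicit Arguments.
Unset Strict Implicit.
Unset Printing Implicit Defensive.

Definition binseq := nat -> bool.
Definition prefix (S : binseq) (n : nat) : seq bool := mkseq S n.

Fixpoint bits_aux (fuel n : nat) : seq bool :=
  match fuel with
  | 0 => [::]
  | f.+1 => if n == 0 then [::] else odd n :: bits_aux f n./2
  end.
Definition bin (n : nat) : seq bool := rev (bits_aux n n).
Definition bstring (n : nat) : seq bool := behead (bin n).

Fixpoint dagger (x : seq bool) : seq bool :=
  match x with
  | [::] => [::]
  | [:: a] => [:: a; true]
  | a :: s => a :: false :: dagger s
  end.
Definition diamond (x : seq bool) : seq bool := map negb (dagger (true :: x)).
Definition dbl (x : seq bool) : seq bool := flatten [seq [:: b; b] | b <- x].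

Record fst := FST {
  fst_state : finType;
  fst_start : fst_state;
  fst_delta : fst_state -> bool -> fst_state;
  fst_nu : fst_state -> bool -> seq bool }.

Fixpoint fst_run (T : fst) (q : fst_state T) (x : seq bool) : seq bool :=
  match x with
  | [::] => [::]
  | b :: x' => @fst_nu T q b ++ @fst_run T (@fst_delta T q b) x'
  end.
Definition fst_out (T : fst) (x : seq bool) : seq bool := @fst_run T (fst_start T) x.
Definition fst_dhat (T : fst) (x : seq bool) : fst_state T :=
  foldl (@fst_delta T) (fst_start T) x.
Definition ILFST (T : fst) : Prop :=
  injective (fun x : seq bool => (fst_out T x, fst_dhat T x)).

(** ---------- FSTs given by the fixed binary description ----------
   Data: m states q_1..q_m, start index i, lists ns = [n_1..n_{2m}],
   ns' = [n'_1..n'_{2m}]; transition t = 2j-1+b (0-based position 2(j-1)+b)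
   goes from q_j to q_{1 + (n_t mod m)} with output string(n'_t). *)
Definition tpos (q : nat) (b : bool) : nat := (q.-1).*2 + b.
Definition dnext (m : nat) (ns : seq nat) (q : nat) (b : bool) : nat :=
  (nth 0 ns (tpos q b) %% m).+1.
Definition dnu (ns' : seq nat) (q : nat) (b : bool) : seq bool :=
  bstring (nth 0 ns' (tpos q b)).
Fixpoint drun (m : nat) (ns ns' : seq nat) (q : nat) (y : seq bool) : seq bool :=
  match y with
  | [::] => [::]
  | b :: y' => dnu ns' q b ++ drun m ns ns' (dnext m ns q b) y'
  end.

Definition valid_data (m i : nat) (ns ns' : seq nat) : Prop :=
  [/\ 0 < m, 0 < i <= m, size ns = m.*2, size ns' = m.*2
    & all (fun n => 0 < n) ns && all (fun n => 0 < n) ns'].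

(** pi = bin(n_1)^ddagger string(n'_1)^diamond ... ; ddagger empty on self-loops *)
Definition desc_pi (m : nat) (ns ns' : seq nat) : seq bool :=
  flatten [seq (if nth 0 ns p %% m == p./2 then [::] else dagger (bin (nth 0 ns p)))
               ++ diamond (bstring (nth 0 ns' p)) | p <- iota 0 m.*2].
Definition desc (m i : nat) (ns ns' : seq nat) : seq bool :=
  dbl (bin i) ++ [:: false; true] ++ desc_pi m ns ns'.

Definition Dwitness (k : nat) (x y : seq bool) : Prop :=
  exists m i ns ns', valid_data m i ns ns' /\ size (desc m i ns ns') <= k
                     /\ drun m ns ns' i y = x.

(** D^k(x) = o, with None standing for +infinity (min of the empty set). *)
Definition Dk_is (k : nat) (x : seq bool) (o : option nat) : Prop :=
  match o with
  | None => ~ exists y, Dwitness k x y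
  | Some d => (exists y, Dwitness k x y /\ size y = d)
              /\ forall y, Dwitness k x y -> d <= size y
  end.

(** a - b >= r in extended naturals (infinity - finite = infinity) *)
Definition gap_ge (a b : option nat) (r : R) : Prop :=
  match a, b with
  | Some a, Some b => (INR a - INR b >= r)%R
  | None, Some _ => True
  | _, None => False
  end.

Definition FS_deep (S : binseq) : Prop :=
  exists alpha : R, (0 < alpha)%R /\
    forall k, exists k', forall N, exists n, N <= n /\
      exists a b, Dk_is k (prefix S n) a /\ Dk_is k' (prefix S n) b /\
                  gap_ge a b (alpha * INR n)%R.

(** Greedy LZ78 parsing: next phrase = shortest prefix of the rest not yet a
    phrase; if none, the (last) phrase is the whole rest. *)
Fixpoint lz_aux (fuel : nat) (dict : seq (seq bool)) (x : seq bool)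
  : seq (seq bool) :=
  match fuel with
  | 0 => [::]
  | f.+1 =>
    if x is [::] then [::] else
    let len := minn (find (fun k => take k.+1 x \notin dict) (iota 0 (size x))).+1
                    (size x) in
    take len x :: lz_aux f (rcons dict (take len x)) (drop len x)
  end.
Definition lz_parse (x : seq bool) : seq (seq bool) := lz_aux (size x) [::] x.

(** prefix-free code c_j of an index j >= 0 (Elias-delta style) *)
Definition lz_code (j : nat) : seq bool :=
  dagger (bin (size (bin j.+1))) ++ bstring j.+1.

(** l(i): index of the phrase x_i minus its last bit among x_0 = lambda, x_1.. *)
Definition lz_ptr (prev : seq (seq bool)) (p : seq bool) : nat :=
  if size p <= 1 then 0 else (index (take (size p).-1 p) prev).+1.

Definition LZ (x : seq bool) : seq bool :=
  let ps := lz_parse x in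
  flatten [seq lz_code (lz_ptr (take i ps) (nth [::] ps i))
                 ++ [:: last false (nth [::] ps i)] | i <- iota 0 (size ps)].

Definition LZ_deep (S : binseq) : Prop :=
  exists alpha : R, (0 < alpha)%R /\
    forall C : fst, ILFST C -> exists N, forall n, N <= n ->
      (INR (size (fst_out C (prefix S n))) - INR (size (LZ (prefix S n)))
         >= alpha * INR n)%R.

Definition io_LZ_deep (S : binseq) : Prop :=
  exists alpha : R, (0 < alpha)%R /\
    forall C : fst, ILFST C -> forall N, exists n, N <= n /\
      (INR (size (fst_out C (prefix S n))) - INR (size (LZ (prefix S n)))
         >= alpha * INR n)%R.

From Pilot Require Import Defs.
From mathcomp Require Import all_boot.
From Stdlib Require Import Reals Lra Wf_nat Classical.
From mathcomp Require Import ssrnat zify.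

Set Implicit Arguments.
Unset Strict Implicit.
Unset Printing Implicit Defensive.

(** The sequence is built in phases. Phase [i] starts after a prefix of length [p];
  with [k = log2 (i+1)] (so that every [k] recurs), [l = 2^(4k+10)] and
  [r = 2^(p+l+64)], it consists of [r^2] copies of the concatenation of all words of
  length [l], followed by [i] times as many zeros as everything before.
  At the end of the repeated part, an information lossless transducer with [k]
  states, or any transducer with a description of size at most [k], must spend
  nearly [l] bits on almost every copy of almost every word of length [l], since
  these copies are distinct blocks. Meanwhile LZ78, whose phrases become long
  windows of the period, and a two-state transducer whose description contains the
  period compress that prefix to a small fraction of its length: this gives
  i.o. LZ-depth and FS-depth. At the end of the zeros of a late phase, a transducer
  collapsing runs of [K+1] zeros compresses the prefix to about [2n/(K+1)], so no
  fixed [alpha] separates every ILFST from LZ78 almost everywhere. *)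

(** * Binary representations *)

Lemma bits_aux0 f : bits_aux f 0 = [::].
Proof. by case: f. Qed.

Lemma size_bits_aux f n : size (bits_aux f n) <= f.
Proof. by elim: f n => [|f IH] n //=; case: (n == 0) => //=; exact: IH. Qed.

Lemma size_bin n : size (bin n) <= n.
Proof. by rewrite /bin size_rev size_bits_aux. Qed.

Lemma expn_size_bits_aux f n : 0 < n -> 2 ^ size (bits_aux f n) <= n.*2.
Proof.
elim: f n => [|f IH] n n_gt0 /=; first lia.
rewrite ifF /=; last lia.
rewrite expnS; case: (posnP n./2) => [->|half_gt0]; first by rewrite bits_aux0 /=; lia.
by have := IH _ half_gt0; have := odd_double_half n; lia.
Qed.

Lemma size_bin_leq n s : n < 2 ^ s -> size (bin n) <= s.
Proof.
rewrite /bin size_rev; case: (posnP n) => [->|n_gt0 n_lt]; first by rewrite bits_aux0.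
have := expn_size_bits_aux n n_gt0 => bits_le.
have : 2 ^ size (bits_aux n n) < 2 ^ s.+1 by rewrite expnS; lia.
by rewrite ltn_exp2l.
Qed.

Fixpoint lsb_val (u : seq bool) : nat :=
  if u is b :: u' then b + (lsb_val u').*2 else 1.

Lemma size_lt_lsb_val u : size u < lsb_val u.
Proof. by elim: u => [|b u IH] //=; lia. Qed.

Lemma bits_aux_lsb_val u f : size u < f -> bits_aux f (lsb_val u) = rcons u true.
Proof.
elim: u f => [|b u IH] [|f] hf //=; first by rewrite bits_aux0.
rewrite ifF; last by have := size_lt_lsb_val u; lia.
by rewrite /= oddD odd_double addbF oddb half_bit_double IH.
Qed.

Definition num_of_bstring (w : seq bool) : nat := lsb_val (rev w).

Lemma bin_num_of_bstring w : bin (num_of_bstring w) = true :: w.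
Proof. by rewrite /bin bits_aux_lsb_val ?size_lt_lsb_val // rev_rcons revK. Qed.

Lemma bstring_num_of_bstring w : bstring (num_of_bstring w) = w.
Proof. by rewrite /bstring bin_num_of_bstring. Qed.

Lemma num_of_bstring_gt0 w : 0 < num_of_bstring w.
Proof. by have := size_lt_lsb_val (rev w); rewrite /num_of_bstring; lia. Qed.

Lemma size_dagger x : size (dagger x) = (size x).*2.
Proof.
elim: x => [|a [|b s] IH] //.
by rewrite [dagger _]/= /= IH /=; lia.
Qed.

Lemma size_diamond x : size (diamond x) = (size x).+1.*2.
Proof. by rewrite /diamond size_map size_dagger. Qed.

Lemma cat_eq_split (T : Type) (o r a b : seq T) :
  o ++ r = a ++ b -> size o <= size a ->
  a = o ++ drop (size o) a /\ r = drop (size o) a ++ b.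
Proof.
move=> e le_oa; have ea := congr1 (take (size o)) e; have er := congr1 (drop (size o)) e.
rewrite take_size_cat // takel_cat // in ea.
rewrite drop_size_cat // drop_cat in er.
split; first by rewrite {1}ea cat_take_drop.
move: er; case: ltnP => // ge_oa.
by rewrite (_ : size o = size a) ?subnn ?drop0 ?drop_size //; lia.
Qed.

Lemma sumn_map_leq (A : eqType) (g : A -> nat) s B :
  {in s, forall x, g x <= B} -> sumn (map g s) <= size s * B.
Proof.
elim: s => [|a s IH] gB //=; rewrite mulSn.
by apply: leq_add; [apply: gB; rewrite mem_head | apply: IH => x sx; apply: gB; rewrite inE sx orbT].
Qed.

Lemma sumn_map_geq (A : eqType) (g : A -> nat) s B :
  {in s, forall x, B <= g x} -> size s * B <= sumn (map g s).
Proof.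
elim: s => [|a s IH] gB //=; rewrite mulSn.
by apply: leq_add; [apply: gB; rewrite mem_head | apply: IH => x sx; apply: gB; rewrite inE sx orbT].
Qed.

Lemma leq_mul_count_sumn (A : Type) (f : A -> nat) T s :
  T * count (fun x => T <= f x) s <= sumn (map f s).
Proof.
elim: s => [|x s IH] /=; first by rewrite muln0.
by case: (leqP T (f x)) => /= h; lia.
Qed.

Lemma count_leq_card_inj (A : eqType) (U : finType) (P : pred A) (code : A -> U) s :
  uniq s -> {in s &, forall x y, P x -> P y -> code x = code y -> x = y} ->
  count P s <= #|U|.
Proof.
move=> s_uniq code_inj; rewrite -size_filter.
have /card_uniqP : uniq (map code [seq x <- s | P x]).
  rewrite map_inj_in_uniq ?filter_uniq // => x y.
  by rewrite !mem_filter => /andP[Px xs] /andP[Py ys]; exact: code_inj.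
by rewrite size_map => <-; exact: max_card.
Qed.

Lemma sumn_lb_coded (A : eqType) (U : finType) (f : A -> nat) T (code : A -> U) s :
  uniq s -> {in s &, forall x y, f x < T -> f y < T -> code x = code y -> x = y} ->
  T * (size s - #|U|) <= sumn (map f s).
Proof.
move=> s_uniq code_inj.
have few_light : count (predC (fun x => T <= f x)) s <= #|U|.
  apply: (count_leq_card_inj (code := code)) => // x y xs ys /= Px Py.
  by apply: code_inj => //; lia.
apply: leq_trans (leq_mul_count_sumn f T s); apply: leq_mul (leqnn T) _.
by have := count_predC (fun x => T <= f x) s; lia.
Qed.

Definition padt T (s : seq bool) : T.-tuple bool := [tuple nth false s i | i < T].

Lemma padt_inj T s1 s2 : size s1 = size s2 -> size s1 <= T -> padt T s1 = padt T s2 -> s1 = s2.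
Proof.
move=> e le_s1T eq_pad; apply/(@eq_from_nth _ false) => // i i_lt.
have iT : i < T by lia.
by have := congr1 (fun t => tnth t (Ordinal iT)) eq_pad; rewrite !tnth_mktuple.
Qed.

(** * Information lossless transducers on repeated blocks *)

Section IlfstBlocks.
Variable C : fst.
Local Notation Q := (fst_state C).
Local Notation dl := (@fst_delta C).

Lemma fst_run_cat (q : Q) x y :
  fst_run q (x ++ y) = fst_run q x ++ fst_run (foldl dl q x) y.
Proof. by elim: x q => [|b x IH] q //=; rewrite IH catA. Qed.

Definition reachable (q : Q) := exists z, fst_dhat C z = q.

Lemma reachable_foldl q u : reachable q -> reachable (foldl dl q u).
Proof. by case=> z <-; exists (z ++ u); rewrite /fst_dhat foldl_cat. Qed.

Lemma ilfst_run_inj q u v : ILFST C -> reachable q ->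
  fst_run q u = fst_run q v -> foldl dl q u = foldl dl q v -> u = v.
Proof.
move=> C_il [z <-] eq_run eq_fin.
have /eqP : z ++ u = z ++ v.
  apply: C_il; rewrite /= /fst_out /fst_dhat !fst_run_cat !foldl_cat.
  by rewrite -/(fst_dhat C z) eq_run eq_fin.
by rewrite eqseq_cat // => /andP[_ /eqP].
Qed.

Fixpoint block_states (q : Q) (bs : seq (seq bool)) : seq (seq bool * Q) :=
  if bs is b :: bs' then (b, q) :: block_states (foldl dl q b) bs' else [::].

Lemma unzip1_block_states q bs : unzip1 (block_states q bs) = bs.
Proof. by elim: bs q => [|b bs IH] q //=; rewrite IH. Qed.

Lemma size_run_flatten q bs : size (fst_run q (flatten bs)) =
  sumn [seq size (fst_run bq.2 bq.1) | bq <- block_states q bs].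
Proof. by elim: bs q => [|b bs IH] q //=; rewrite fst_run_cat size_cat IH. Qed.

Lemma block_states_reachable q bs bq :
  reachable q -> bq \in block_states q bs -> reachable bq.2.
Proof.
elim: bs q => [|b bs IH] q q_reach //=.
by rewrite inE => /predU1P[-> //|]; apply/IH/reachable_foldl.
Qed.

(* A block whose output is shorter than [T] is determined by its start state, its
   padded output and its end state, because [C] is information lossless. *)
Lemma ilfst_run_distinct_blocks q bs T : ILFST C -> reachable q -> uniq bs ->
  T * (size bs - #|{: Q * ('I_T.+1 * T.-tuple bool) * Q}|) <= size (fst_run q (flatten bs)).
Proof.
move=> C_il q_reach bs_uniq.
rewrite size_run_flatten -{1}(unzip1_block_states q bs) size_map.
apply: (sumn_lb_coded (code := fun bq : seq bool * Q =>
  (bq.2, (inord (size (fst_run bq.2 bq.1)), padt T (fst_run bq.2 bq.1)), foldl dl bq.2 bq.1))).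
  apply: (@map_uniq _ _ (@Datatypes.fst _ _)).
  by have := unzip1_block_states q bs; rewrite /unzip1 => ->.
move=> [b1 s1] [b2 s2] in1 in2 /= short1 short2 codes_eq.
have /= eq_pad := congr1 (fun c => c.1.2.2) codes_eq.
case: codes_eq => eq_s eq_size _ eq_fin; subst s2.
have s1_reach := block_states_reachable q_reach in1.
move/(congr1 val): eq_size; rewrite /= !inordK ?ltnS ?(ltnW short1) ?(ltnW short2) // => eq_size.
by rewrite (ilfst_run_inj C_il s1_reach (padt_inj eq_size (ltnW short1) eq_pad) eq_fin).
Qed.

Lemma ilfst_run_repeated_blocks r bs T q : ILFST C -> reachable q -> uniq bs ->
  r * (T * (size bs - #|{: Q * ('I_T.+1 * T.-tuple bool) * Q}|))
    <= size (fst_run q (flatten (nseq r (flatten bs)))).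
Proof.
move=> C_il; elim: r q => [|r IH] q q_reach bs_uniq; first by rewrite mul0n.
rewrite /= fst_run_cat size_cat mulSn.
by apply: leq_add; [exact: ilfst_run_distinct_blocks | apply/IH/bs_uniq/reachable_foldl].
Qed.

Lemma ilfst_out_repeated_blocks p r bs T : ILFST C -> uniq bs ->
  r * (T * (size bs - #|Q| * (T.+1 * 2 ^ T) * #|Q|))
    <= size (fst_out C (p ++ flatten (nseq r (flatten bs)))).
Proof.
move=> C_il bs_uniq; rewrite /fst_out fst_run_cat size_cat.
have /(ilfst_run_repeated_blocks r T C_il)/(_ bs_uniq) : reachable (foldl dl (fst_start C) p).
  by exists p.
by rewrite !card_prod card_ord card_tuple card_bool => /leq_trans; apply; exact: leq_addl.
Qed.
End IlfstBlocks.

(** * Transducers given by descriptions *)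

Section DescribedRuns.
Variables (m k : nat) (ns ns' : seq nat).
Hypothesis m_gt0 : 0 < m.
Hypothesis dnu_short : forall q b, 0 < q <= m -> size (dnu ns' q b) < k.

Local Notation run := (drun m ns ns').

Definition dfinal q y := foldl (dnext m ns) q y.

Lemma dnext_state q b : 0 < dnext m ns q b <= m.
Proof. by rewrite /dnext; have := ltn_pmod (nth 0 ns (tpos q b)) m_gt0; lia. Qed.

Lemma dfinal_state q y : 0 < q <= m -> 0 < dfinal q y <= m.
Proof. by elim: y q => [|b y IH] q q_ok //=; apply/IH/dnext_state. Qed.

Lemma drun_split q y a b : 0 < q <= m -> run q y = a ++ b ->
  exists y1 y2 a2, [/\ y = y1 ++ y2, size a2 < k, run q y1 ++ a2 = a
                     & run (dfinal q y1) y2 = a2 ++ b].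
Proof.
elim: y q a => [|c y IH] q a q_ok /=.
  case: a => //; case: b => // _.
  by exists [::], [::], [::]; split => //=; have := dnu_short false q_ok; lia.
case: (leqP (size (dnu ns' q c)) (size a)) => [le_out e | lt_out e].
  have [ea /(IH _ _ (dnext_state q c))] := cat_eq_split e le_out.
  move=> [y1 [y2 [a2 [-> a2_short eq_a rest]]]].
  by exists (c :: y1), y2, a2; split; rewrite //= -catA eq_a -ea.
by exists [::], (c :: y), a; split => //=; have := dnu_short c q_ok; lia.
Qed.

(* Every output block arises as [drop o (run q z ++ e)] from a piece [z] of the
   input read from state [q], with a skipped offset [o < k] and a pending tail [e]
   of length [< k]. *)
Definition block_of (c : nat * seq bool * nat * seq bool) : seq bool :=
  drop c.1.2 (run c.1.1.1 c.1.1.2 ++ c.2).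
Definition block_cut (c : nat * seq bool * nat * seq bool) : bool :=
  [&& 0 < c.1.1.1 <= m, c.1.2 < k & size c.2 < k].

Lemma drun_blocks bs q y a2 r : 0 < q <= m -> size a2 < k ->
  run q y = a2 ++ flatten bs ++ r ->
  exists cs y2 q' a2', [/\ map block_of cs = bs, all block_cut cs,
     size y = sumn (map (fun c => size c.1.1.2) cs) + size y2,
     (0 < q' <= m) /\ size a2' < k & run q' y2 = a2' ++ r].
Proof.
elim: bs q y a2 => [|b bs IH] q y a2 q_ok a2_short /= e.
  by exists [::], y, q, a2; split.
have {}e : run q y = (a2 ++ b) ++ (flatten bs ++ r) by rewrite e !catA.
have [z [y2 [a2' [-> a2'_short eq_b /(IH _ _ _ (dfinal_state z q_ok) a2'_short)]]]] :=
  drun_split q_ok e.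
move=> [cs [y3 [q' [a3 [<- cuts size_y2 rest]]]]].
exists ((q, z, size a2, a2') :: cs), y3, q', a3; split => //=.
- by rewrite /block_of /= eq_b drop_size_cat.
- by rewrite cuts andbT /block_cut /= q_ok a2_short a2'_short.
- by rewrite size_cat size_y2; lia.
Qed.

Definition cut_codes T := {: 'I_m.+1 * ('I_T.+1 * T.-tuple bool) * 'I_k.+1 * ('I_k.+1 * k.-tuple bool)}.

Lemma drun_distinct_blocks bs T q y a2 r : 0 < q <= m -> size a2 < k -> uniq bs ->
  run q y = a2 ++ flatten bs ++ r ->
  exists y2 q' a2', [/\ T * (size bs - #|cut_codes T|) + size y2 <= size y,
     (0 < q' <= m) /\ size a2' < k & run q' y2 = a2' ++ r].
Proof.
move=> q_ok a2_short bs_uniq e.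
have [cs [y2 [q' [a2' [eq_bs cuts -> rest]]]]] := drun_blocks q_ok a2_short e.
exists y2, q', a2'; split => //; rewrite leq_add2r -eq_bs size_map.
apply: (sumn_lb_coded (code := fun c : nat * seq bool * nat * seq bool =>
   (inord c.1.1.1, (inord (size c.1.1.2), padt T c.1.1.2), inord c.1.2,
    (inord (size c.2), padt k c.2)))).
  by apply: (@map_uniq _ _ block_of); rewrite eq_bs.
move=> [[[q1 z1] o1] e1] [[[q2 z2] o2] e2] in1 in2 /= short1 short2 codes_eq.
move: (allP cuts _ in1) (allP cuts _ in2); rewrite /block_cut /=.
move=> /and3P[q1_ok o1_ok e1_ok] /and3P[q2_ok o2_ok e2_ok].
have /= eq_z := congr1 (fun c => c.1.1.2.2) codes_eq.
have /= eq_e := congr1 (fun c => c.2.2) codes_eq.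
have /= := congr1 (fun c => (val c.1.1.1, val c.1.1.2.1, val c.1.2, val c.2.1)) codes_eq.
rewrite !inordK; try lia.
case=> -> eq_sz -> eq_se.
by rewrite (padt_inj eq_sz _ eq_z) 1?(padt_inj eq_se _ eq_e) //; lia.
Qed.

Lemma drun_repeated_blocks n bs T q y a2 r : 0 < q <= m -> size a2 < k -> uniq bs ->
  run q y = a2 ++ flatten (nseq n (flatten bs)) ++ r ->
  n * (T * (size bs - #|cut_codes T|)) <= size y.
Proof.
elim: n q y a2 => [|n IH] q y a2 q_ok a2_short bs_uniq e; first by rewrite mul0n.
rewrite /= -catA in e.
have [y2 [q' [a2' [le_y [q'_ok a2'_short] rest]]]] := drun_distinct_blocks T q_ok a2_short bs_uniq e.
by have := IH _ _ _ q'_ok a2'_short bs_uniq rest; rewrite mulSn; lia.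
Qed.
End DescribedRuns.

Lemma desc_size_bounds k m i ns ns' :
  valid_data m i ns ns' -> size (desc m i ns ns') <= k ->
  [/\ 0 < m, m <= k, 0 < i <= m & forall q b, 0 < q <= m -> size (dnu ns' q b) < k].
Proof.
move=> [m_gt0 i_ok _ _ _] desc_k.
have pi_k : size (desc_pi m ns ns') <= k.
  by apply: leq_trans desc_k; rewrite /desc !size_cat; lia.
rewrite /desc_pi size_flatten /shape -map_comp in pi_k.
split => // [|q b q_ok].
  suff : m.*2 * 2 <= k by lia.
  apply: leq_trans pi_k; rewrite -{1}(size_iota 0 m.*2); apply: sumn_map_geq => p _ /=.
  by rewrite size_cat size_diamond; apply: leq_trans (leq_addl _ _).
have p_in : tpos q b \in iota 0 m.*2 by rewrite mem_iota /tpos; case: b; lia.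
have : size (diamond (bstring (nth 0 ns' (tpos q b)))) <= k.
  apply: leq_trans pi_k.
  rewrite -(cat_take_drop (index (tpos q b) (iota 0 m.*2)) (iota 0 m.*2)).
  rewrite (drop_nth 0) ?index_mem // nth_index // map_cat sumn_cat /= size_cat.
  by set c := size (if _ then _ else _); lia.
by rewrite /dnu size_diamond; lia.
Qed.

Definition ncodes k T := k.+1 * (T.+1 * 2 ^ T) * k.+1 * (k.+1 * 2 ^ k).

Lemma Dwitness_repeated_blocks k x y p r bs T : Dwitness k x y ->
  x = p ++ flatten (nseq r (flatten bs)) -> uniq bs ->
  r * (T * (size bs - ncodes k T)) <= size y.
Proof.
move=> [m [i [ns [ns' [valid [desc_k run_y]]]]]] x_eq bs_uniq; rewrite x_eq in run_y.
have [m_gt0 m_k i_ok dnu_short] := desc_size_bounds valid desc_k.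
have [y1 [y2 [a2 [-> a2_short _ rest]]]] := drun_split m_gt0 dnu_short i_ok run_y.
rewrite -[flatten (nseq r _)]cats0 in rest.
have := drun_repeated_blocks m_gt0 dnu_short T (dfinal_state ns m_gt0 y1 i_ok) a2_short bs_uniq rest.
rewrite /cut_codes !card_prod !card_ord !card_tuple card_bool size_cat.
move=> le_y2; apply: leq_trans (leq_addl (size y1) _); apply: leq_trans le_y2.
apply: leq_mul (leqnn r) (leq_mul (leqnn T) (leq_sub2l _ _)).
by rewrite /ncodes; do 3!apply: leq_mul => //.
Qed.

Lemma Dk_exists k x : exists o, Dk_is k x o.
Proof.
case: (classic (exists y, Dwitness k x y)) => [[y wy]|no_witness]; last by exists None.
have [d [[[y' [wy' <-]] d_min] _]] := dec_inh_nat_subset_has_unique_least_element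
  (fun d => exists y, Dwitness k x y /\ size y = d) (fun d => classic _)
  (ex_intro _ (size y) (ex_intro _ y (conj wy erefl))).
exists (Some (size y')); split; first by exists y'.
by move=> z wz; apply/leP/d_min; exists z.
Qed.

(** * The LZ78 parsing *)

Definition lz_len (dict : seq (seq bool)) (x : seq bool) : nat :=
  minn (find (fun k => take k.+1 x \notin dict) (iota 0 (size x))).+1 (size x).

Lemma lz_aux_nil f dict : lz_aux f dict [::] = [::].
Proof. by case: f. Qed.

Lemma lz_len_fresh dict x : lz_len dict x < size x -> take (lz_len dict x) x \notin dict.
Proof.
rewrite /lz_len; set i := find _ _ => lt_len.
have i_lt : i < size x by lia.
have has_fresh : has (fun k => take k.+1 x \notin dict) (iota 0 (size x)).
  by rewrite has_find size_iota.
have := nth_find 0 has_fresh; rewrite -/i nth_iota // add0n.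
by rewrite (_ : minn i.+1 (size x) = i.+1) //; lia.
Qed.

Lemma lz_aux_spec f dict x : size x <= f -> uniq dict ->
  let ps := lz_aux f dict x in
  [/\ flatten ps = x, all (fun p => p != [::]) ps & uniq (dict ++ take (size ps).-1 ps)].
Proof.
elim: f dict x => [|f IH] dict [|b x'] //= x_f dict_uniq; rewrite ?cats0 //.
rewrite -/(lz_len dict (b :: x')); set x := b :: x' in x_f *; set len := lz_len dict x.
have len_gt0 : 0 < len by rewrite /len /lz_len /x /=; lia.
have rest_f : size (drop len x) <= f by rewrite size_drop /x /= in x_f *; lia.
case: (ltnP len (size x)) => [lt_len | ge_len]; last first.
  by rewrite drop_oversize // lz_aux_nil take_oversize //=; split; rewrite ?cats0.
have /(IH _ _ rest_f) [flat nonempty uniq_rest] : uniq (rcons dict (take len x)).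
  by rewrite rcons_uniq lz_len_fresh.
split => /=; first by rewrite flat cat_take_drop.
  by rewrite nonempty andbT -size_eq0 size_takel ?(ltnW lt_len) // -lt0n.
by move: uniq_rest; case: (lz_aux f _ _) => [|p ps] /=; rewrite ?cats0 // -cats1 -catA.
Qed.

Lemma lz_parse_spec x : let ps := lz_parse x in
  [/\ flatten ps = x, all (fun p => p != [::]) ps & uniq (take (size ps).-1 ps)].
Proof. exact: lz_aux_spec. Qed.

(* Each of the [c] phrases costs at most [3 s + 1] bits, as its pointer is [<= c < 2 ^ s]. *)
Lemma size_LZ_leq x s : (size (lz_parse x)).+1 < 2 ^ s ->
  size (LZ x) <= size (lz_parse x) * (3 * s + 1).
Proof.
move=> parse_lt; rewrite /LZ size_flatten /shape -map_comp.
rewrite -{2}(size_iota 0 (size (lz_parse x))); apply: sumn_map_leq => i.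
rewrite mem_iota add0n => /andP[_ i_lt] /=.
rewrite size_cat /= /lz_code size_cat size_dagger /bstring size_behead.
set ps := lz_parse x; set j := lz_ptr _ _.
have j_le : j <= i.+1.
  rewrite /j /lz_ptr; case: ifP => _ //.
  have := index_size (take (size (nth [::] ps i)).-1 (nth [::] ps i)) (take i ps).
  by rewrite size_take; case: ifP; lia.
have size_j : size (bin j.+1) <= s by apply: size_bin_leq; lia.
by have := size_bin (size (bin j.+1)); lia.
Qed.

Lemma flatten_drop_suffix (ps : seq (seq bool)) p q : all (fun u => u != [::]) ps ->
  flatten ps = p ++ q -> exists j d, j <= size p /\ flatten (drop j.+1 ps) = drop d q.
Proof.
elim: ps p => [|u ps IH] p /=.
  by move=> _; case: p => //; case: q => // _; exists 0, 0.
move=> /andP[u_ne ps_ne] e.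
case: (leqP (size u) (size p)) => [le_up | lt_pu].
  have [_ /(IH _ ps_ne) [j [d [j_le rest]]]] := cat_eq_split e le_up.
  exists j.+1, d; split => //; rewrite size_drop in j_le.
  have : 0 < size u by rewrite lt0n size_eq0.
  lia.
exists 0, (size u - size p); split; rewrite ?drop0 //.
have := congr1 (drop (size u)) e; rewrite drop_size_cat // drop_cat.
by case: ltnP => //; lia.
Qed.

Lemma mem_windows (ss : seq (seq bool)) u : u \in ss ->
  exists a, u = take (size u) (drop a (flatten ss)).
Proof.
elim: ss => [|v ss IH] //=; rewrite inE => /predU1P[->|/IH [a ea]].
  by exists 0; rewrite drop0 take_size_cat.
by exists (size v + a); rewrite addnC -drop_drop drop_size_cat.
Qed.

Definition cyc_window (w : seq bool) (o n : nat) : seq bool :=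
  mkseq (fun i => nth false w ((o + i) %% size w)) n.

Lemma nth_flatten_nseq w r t : 0 < size w -> t < r * size w ->
  nth false (flatten (nseq r w)) t = nth false w (t %% size w).
Proof.
move=> w_gt0; elim: r t => [|r IH] t t_lt; first by rewrite mul0n in t_lt.
rewrite /= nth_cat; case: ltnP => [t_w | w_t]; first by rewrite modn_small.
rewrite IH; last by rewrite mulSn in t_lt; lia.
by rewrite -[in RHS](subnK w_t) modnDr.
Qed.

Lemma window_flatten_nseq w r a n : 0 < size w ->
  size (take n (drop a (flatten (nseq r w)))) = n ->
  take n (drop a (flatten (nseq r w))) = cyc_window w (a %% size w) n.
Proof.
move=> w_gt0 size_n.
have size_rep : size (flatten (nseq r w)) = r * size w.
  by rewrite size_flatten /shape map_nseq sumn_nseq mulnC.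
apply: (@eq_from_nth _ false); first by rewrite size_n size_mkseq.
move=> i; rewrite size_n => i_lt.
have ai_lt : a + i < r * size w.
  by move: size_n; rewrite size_take size_drop size_rep; case: ltnP; lia.
by rewrite nth_take // nth_drop nth_mkseq // nth_flatten_nseq // modnDml.
Qed.

Lemma count_short_cyc_windows w h s : uniq s ->
  {in s, forall u, exists2 o, o < size w & u = cyc_window w o (size u)} ->
  count (fun u => size u < h) s <= size w * h.
Proof.
move=> s_uniq windows; rewrite -size_filter.
rewrite -(size_iota 0 (size w)) -(size_iota 0 h) -(size_allpairs (cyc_window w)).
apply: uniq_leq_size; first exact: filter_uniq.
move=> u; rewrite mem_filter size_iota => /andP[u_short /windows [o o_lt ->]].
by apply: allpairs_f; rewrite mem_iota add0n leq0n ?o_lt ?u_short.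
Qed.

Lemma lz_parse_periodic_tail p w r : 0 < size w ->
  exists s, [/\ uniq s, {in s, forall u, exists2 o, o < size w & u = cyc_window w o (size u)},
     sumn (map size s) <= r * size w
   & size (lz_parse (p ++ flatten (nseq r w))) <= size p + 2 + size s].
Proof.
move=> w_gt0; set q := flatten (nseq r w).
have size_q : size q = r * size w by rewrite size_flatten /shape map_nseq sumn_nseq mulnC.
have [flat nonempty uniq_ps] := lz_parse_spec (p ++ q).
set ps := lz_parse _ in flat nonempty uniq_ps *.
have [j [d [j_le tail]]] := flatten_drop_suffix nonempty flat.
set ps2 := drop j.+1 ps in tail.
exists (take (size ps2).-1 ps2); split.
- case: (posnP (size ps2)) => [-> | ps2_gt0]; first by rewrite take0.
  rewrite /ps2 take_drop (_ : _ + j.+1 = (size ps).-1); first exact: drop_uniq.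
  by move: ps2_gt0; rewrite /ps2 size_drop; lia.
- move=> u /mem_take/mem_windows [a]; rewrite tail drop_drop => ea.
  exists ((a + d) %% size w); first exact: ltn_pmod.
  by rewrite {1}ea window_flatten_nseq // -ea.
- rewrite -size_flatten -size_q; apply: leq_trans (_ : _ <= size (flatten ps2)) _.
    by rewrite -[in leqRHS](cat_take_drop (size ps2).-1 ps2) flatten_cat size_cat leq_addr.
  by rewrite tail size_drop leq_subr.
- by rewrite size_takel ?leq_pred // /ps2 size_drop; lia.
Qed.

(* Phrases inside a long periodic stretch are distinct windows of the period, so
   all but [size w * h.+1] of them have length [> h]. *)
Lemma lz_parse_periodic p w r h : 0 < size w ->
  h.+1 * (size (lz_parse (p ++ flatten (nseq r w))) - size p - 2 - size w * h.+1)
    <= r * size w.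
Proof.
move=> w_gt0; have [s [s_uniq windows size_s parse_le]] := lz_parse_periodic_tail p r w_gt0.
have short := count_short_cyc_windows h.+1 s_uniq windows.
have long : size s - size w * h.+1 <= count (fun u => h.+1 <= size u) s.
  apply: leq_trans (leq_sub2l _ short) _.
  rewrite -(count_predC (fun u => h.+1 <= size u) s).
  rewrite (@eq_count _ (predC _) (fun u => size u < h.+1)) ?addnK // => u /=.
  by rewrite ltnS (leqNgt (size u) h).
apply: leq_trans (leq_trans (leq_mul_count_sumn size h.+1 s) size_s).
by apply: leq_mul (leqnn _) (leq_trans _ long); lia.
Qed.

(** * Compressing runs of zeros *)

Section ZeroRuns.
Variable K : nat.

(* The state counts pending zeros; a one is emitted as [1 0^j 1] and each full run
   of [K.+1] zeros as the single bit [0]. *)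
Definition zrun_delta (j : 'I_K.+1) (b : bool) : 'I_K.+1 :=
  if b then ord0 else if j < K then inord j.+1 else ord0.
Definition zrun_nu (j : 'I_K.+1) (b : bool) : seq bool :=
  if b then true :: rcons (nseq j false) true else if j < K then [::] else [:: false].
Definition zrun_fst : fst := @FST 'I_K.+1 ord0 zrun_delta zrun_nu.

Fixpoint zrun_decode (pending : option nat) (r : seq bool) : seq bool :=
  match r, pending with
  | [::], _ => [::]
  | true :: r', None => zrun_decode (Some 0) r'
  | false :: r', None => nseq K.+1 false ++ zrun_decode None r'
  | true :: r', Some i => nseq i false ++ true :: zrun_decode None r'
  | false :: r', Some i => zrun_decode (Some i.+1) r'
  end.

Lemma nseq_cons (T : Type) (a : T) j s : nseq j a ++ a :: s = nseq j.+1 a ++ s.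
Proof. by elim: j => //= j ->. Qed.

Lemma zrun_decode_one i j r :
  zrun_decode (Some i) (nseq j false ++ true :: r) = nseq (i + j) false ++ true :: zrun_decode None r.
Proof. by elim: j i => [|j IH] i /=; rewrite ?addn0 ?IH ?addSnnS. Qed.

Lemma zrun_decode_run x (j : 'I_K.+1) :
  zrun_decode None (@fst_run zrun_fst j x) ++ nseq (foldl zrun_delta j x) false
    = nseq j false ++ x.
Proof.
elim: x j => [|[] x IH] j /=; first by rewrite cats0.
  by rewrite /zrun_nu /= -cats1 -catA /= zrun_decode_one add0n -catA /= (IH ord0).
rewrite /zrun_nu /zrun_delta /=; case: ifP => j_lt /=.
  by rewrite IH inordK ?nseq_cons //; lia.
by rewrite (_ : nat_of_ord j = K) -?catA ?(IH ord0) /= ?nseq_cons //; have := ltn_ord j; lia.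
Qed.

Lemma zrun_fst_ILFST : ILFST zrun_fst.
Proof.
move=> x y [eq_out eq_state]; rewrite /fst_out /fst_dhat in eq_out eq_state.
by have := zrun_decode_run x ord0; rewrite /= eq_out eq_state zrun_decode_run.
Qed.

Lemma size_zrun_run x (j : 'I_K.+1) :
  K.+1 * size (@fst_run zrun_fst j x) + foldl zrun_delta j x
    <= j + count negb x + K.+1 * K.+2 * count idfun x.
Proof.
elim: x j => [|b x IH] j /=; first lia.
have j_le : nat_of_ord j <= K by have := ltn_ord j; lia.
case: b => /=.
  rewrite /zrun_nu /= size_cat size_rcons size_nseq.
  have /= := IH ord0; have : K.+1 * j.+2 <= K.+1 * K.+2 by rewrite leq_mul2l; lia.
  nia.
case: ifP => j_lt /=; last by have /= := IH ord0; lia.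
by have := IH (inord j.+1); rewrite inordK; lia.
Qed.

Lemma size_zrun_fst x : K.+1 * size (fst_out zrun_fst x) <= size x + K.+1 * K.+2 * count idfun x.
Proof.
have := size_zrun_run x ord0; have := count_predC idfun x.
have -> : count (predC idfun) x = count negb x by apply: eq_count.
by rewrite /fst_out /=; lia.
Qed.
End ZeroRuns.

(** * The sequence *)

Definition word_len (k : nat) := 2 ^ (4 * k + 10).
Definition words (l : nat) : seq (seq bool) := [seq val t | t <- enum {: l.-tuple bool}].
Definition all_words (k : nat) : seq bool := flatten (words (word_len k)).
Definition level (i : nat) := logn 2 i.+1.
Definition reps (p k : nat) := 2 ^ (p + word_len k + 64).
Definition rich_part (p k : nat) : seq bool :=
  flatten (nseq (reps p k * reps p k) (all_words k)).
Definition phase (i p : nat) : seq bool :=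
  rich_part p (level i) ++ nseq (i * (p + size (rich_part p (level i)))) false.

Fixpoint stage (i : nat) : seq bool :=
  if i is i'.+1 then stage i' ++ phase i' (size (stage i')) else [::].

Definition Sdeep : binseq := fun j => nth false (stage j.+1) j.

Arguments word_len : simpl never.
Arguments reps : simpl never.
Arguments rich_part : simpl never.
Arguments phase : simpl never.

Lemma words_uniq l : uniq (words l).
Proof. by rewrite /words map_inj_uniq ?enum_uniq //; exact: val_inj. Qed.

Lemma size_words l : size (words l) = 2 ^ l.
Proof. by rewrite /words size_map -cardE card_tuple card_bool. Qed.

Lemma size_all_words k : size (all_words k) = word_len k * 2 ^ word_len k.
Proof.
rewrite /all_words size_flatten /shape /words -map_comp.
have -> : [seq (size \o val) t | t <- enum {: (word_len k).-tuple bool}] =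
          nseq (size (enum {: (word_len k).-tuple bool})) (word_len k).
  by elim: (enum _) => [|t s IH] //=; rewrite IH size_tuple.
by rewrite sumn_nseq -cardE card_tuple card_bool mulnC.
Qed.

Lemma word_len_ge k : 64 * k + 104 <= word_len k.
Proof.
rewrite /word_len expnD (_ : 2 ^ 10 = 1024) //.
by have := ltn_expl (4 * k) (isT : 1 < 2); lia.
Qed.

Lemma size_all_words_gt0 k : 0 < size (all_words k).
Proof. by rewrite size_all_words muln_gt0 !expn_gt0. Qed.

Lemma reps_gt0 p k : 0 < reps p k.
Proof. by rewrite /reps expn_gt0. Qed.

Lemma size_rich_part p k : size (rich_part p k) = reps p k * reps p k * size (all_words k).
Proof. by rewrite /rich_part size_flatten /shape map_nseq sumn_nseq mulnC. Qed.

Lemma reps_leq_rich_part p k : reps p k <= size (rich_part p k).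
Proof.
by rewrite size_rich_part -mulnA leq_pmulr // muln_gt0 reps_gt0 size_all_words_gt0.
Qed.

Lemma ltn_reps p k : p < reps p k.
Proof. by rewrite /reps; apply: leq_trans (ltn_expl p (isT : 1 < 2)) _; rewrite leq_exp2l //; lia. Qed.

Lemma stageS i : stage i.+1 = stage i ++ phase i (size (stage i)).
Proof. by []. Qed.

Lemma size_stage_geq i : i <= size (stage i).
Proof.
elim: i => [|i IH] //; rewrite stageS size_cat /phase size_cat.
by have := reps_leq_rich_part (size (stage i)) (level i); have := reps_gt0 (size (stage i)) (level i); lia.
Qed.

Lemma stage_prefix i j : i <= j -> exists t, stage j = stage i ++ t.
Proof.
move=> /subnK <-; elim: (j - i) => [|d [t IH]]; first by exists [::]; rewrite cats0.
by rewrite addSn stageS IH -catA; eexists.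
Qed.

Lemma prefix_stage n i : n <= size (stage i) -> Defs.prefix Sdeep n = take n (stage i).
Proof.
move=> n_le; apply: (@eq_from_nth _ false); first by rewrite size_mkseq size_takel.
move=> t; rewrite size_mkseq => t_lt; rewrite nth_mkseq // nth_take // /Sdeep.
have [le_ti | lt_it] := leqP t.+1 i.
  have [u ->] := stage_prefix le_ti; rewrite nth_cat.
  by have := size_stage_geq t.+1; case: ltnP => //; lia.
by have [u ->] := stage_prefix (ltnW lt_it); rewrite nth_cat ifT //; lia.
Qed.

Lemma prefix_rich i (p := size (stage i)) :
  Defs.prefix Sdeep (p + size (rich_part p (level i))) = stage i ++ rich_part p (level i).
Proof.
rewrite /p (@prefix_stage _ i.+1); last by rewrite stageS size_cat /phase size_cat; lia.
by rewrite stageS /phase catA -size_cat take_size_cat.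
Qed.

Lemma prefix_stageS i : Defs.prefix Sdeep (size (stage i.+1)) = stage i.+1.
Proof. by rewrite (@prefix_stage _ i.+1) // take_size. Qed.

Lemma level_infinitely_often k N : exists2 i, N <= i & level i = k.
Proof.
exists (2 ^ k * N.*2.+1).-1.
  have : N.*2.+1 <= 2 ^ k * N.*2.+1 by rewrite leq_pmull // expn_gt0.
  lia.
rewrite /level prednK ?muln_gt0 ?expn_gt0 // lognM ?expn_gt0 // pfactorK //.
by rewrite logn_coprime ?addn0 // coprime2n /= odd_double.
Qed.

Definition block_cost (k : nat) := word_len k - (8 * k + 13).

Lemma ncodes_small k : 8 * ncodes k (block_cost k) <= 2 ^ word_len k.
Proof.
have len_ge := word_len_ge k; have k_lt : k.+1 <= 2 ^ k by apply: ltn_expl.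
set T := block_cost k.
have T_lt : T.+1 <= 2 ^ (4 * k + 10) by rewrite /T /block_cost -/(word_len k); lia.
have : ncodes k T <= 2 ^ k * (2 ^ (4 * k + 10) * 2 ^ T) * 2 ^ k * (2 ^ k * 2 ^ k).
  by rewrite /ncodes; repeat apply: leq_mul.
rewrite -!expnD => ncodes_le.
rewrite (_ : word_len k = 3 + (k + (4 * k + 10 + T) + k + (k + k))).
  by rewrite expnD (_ : 2 ^ 3 = 8) // leq_mul2l.
by rewrite /T /block_cost; lia.
Qed.

(* [8 * block_cost k >= 7 * l], [8 * ncodes <= 2 ^ l] and [(7/8)^2 >= 3/4]. *)
Lemma words_cost k : 3 * (word_len k * 2 ^ word_len k)
  <= 4 * (block_cost k * (2 ^ word_len k - ncodes k (block_cost k))).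
Proof.
have := ncodes_small k; have := word_len_ge k.
set l := word_len k; set T := block_cost k; set X := 2 ^ l; set B := ncodes k T.
move=> l_ge B_small.
have T_ge : 7 * l <= 8 * T by rewrite /T /block_cost; lia.
have X_ge : 7 * X <= 8 * (X - B) by lia.
rewrite -(leq_pmul2l (isT : 0 < 16)).
have -> : 16 * (4 * (T * (X - B))) = (8 * T) * (8 * (X - B)) by lia.
by apply: leq_trans (leq_mul T_ge X_ge); rewrite (_ : 7 * l * (7 * X) = 49 * (l * X)); nia.
Qed.

Lemma rich_part_incompressible p k B c : B <= ncodes k (block_cost k) ->
  reps p k * reps p k * (block_cost k * (2 ^ word_len k - B)) <= c ->
  3 * size (rich_part p k) <= 4 * c.
Proof.
move=> B_le c_ge; rewrite size_rich_part size_all_words.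
set r := reps p k * reps p k; rewrite mulnCA.
apply: leq_trans (_ : r * (4 * (block_cost k * (2 ^ word_len k - B))) <= _); last first.
  by rewrite mulnCA leq_mul2l c_ge orbT.
rewrite leq_mul2l; apply/orP; right; apply: leq_trans (words_cost k) _.
by rewrite leq_mul2l leq_mul2l leq_sub2l ?orbT.
Qed.

Lemma reps_big p k : 288 * (p + word_len k + 64) <= reps p k.
Proof.
rewrite /reps; set e := _ + _ + 64.
rewrite (_ : e = 10 + (e - 10)); last by rewrite /e; lia.
by rewrite expnD (_ : 2 ^ 10 = 1024) //; have := ltn_expl (e - 10) (isT : 1 < 2); lia.
Qed.

(* The phrases inside the rich part are distinct windows of its period, hence
   mostly of length [~ reps], so there are only [O (reps * size (all_words k))] of
   them, each costing [O (log (size x))] bits. *)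
Lemma LZ_rich_part_small q k :
  8 * size (LZ (q ++ rich_part (size q) k)) <= size (rich_part (size q) k).
Proof.
set p := size q; set x := q ++ _; set l := word_len k; set R := reps p k.
set e := p + l + 64; set L := size (all_words k); set X := L * R.
have R_big : 288 * e <= R := reps_big p k.
have R_gt0 : 0 < R := reps_gt0 p k.
have p_lt : p < R := ltn_reps p k.
have L_gt0 : 0 < L := size_all_words_gt0 k.
have R_le : R <= X by rewrite /X leq_pmull.
have size_x : size (rich_part p k) = R * X by rewrite size_rich_part /X; lia.
set c := size (lz_parse x).
have c_le : c <= p + 2 + 2 * X.
  have := lz_parse_periodic q (R * R) R.-1 L_gt0.
  rewrite prednK // -/(rich_part p k) -/x -/c -[R * R * L]mulnA [R * L]mulnC leq_pmul2l //.
  by rewrite /X; lia.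
have c_lt : c.+1 < 2 ^ (2 + 2 * l + e).
  have L_lt : L < 2 ^ (2 * l).
    by rewrite /L size_all_words mul2n -addnn expnD ltn_mul2r ltn_expl // expn_gt0.
  have : 4 * X < 2 ^ (2 + 2 * l + e).
    rewrite (expnD 2 (2 + 2 * l) e) (expnD 2 2 (2 * l)) (_ : 2 ^ 2 = 4) // -mulnA ltn_mul2l /=.
    by rewrite /X (_ : 2 ^ e = R) // ltn_mul2r R_gt0 L_lt.
  have : 64 <= e by rewrite /e; lia.
  lia.
have := size_LZ_leq c_lt; rewrite -/c size_x => LZ_le.
have : c * (3 * (2 + 2 * l + e) + 1) <= 4 * X * (9 * e) by apply: leq_mul; lia.
by nia.
Qed.

Lemma INR_gap a b n : 8 * b + 2 * n <= 8 * a -> (INR a - INR b >= / 4 * INR n)%R.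
Proof.
move=> /leP/le_INR; rewrite -!plusE -!multE plus_INR !mult_INR.
have -> : INR 8 = 8%R by simpl; lra.
have -> : INR 2 = 2%R by simpl; lra.
lra.
Qed.

Lemma gap_at_rich_end (q : seq bool) (k a b : nat) :
  3 * size (rich_part (size q) k) <= 4 * a -> 8 * b <= size (rich_part (size q) k) ->
  (INR a - INR b >= / 4 * INR (size q + size (rich_part (size q) k))%N)%R.
Proof.
move=> a_ge b_le; apply: INR_gap.
by have := ltn_reps (size q) k; have := reps_leq_rich_part (size q) k; lia.
Qed.

Lemma card_codes_leq_ncodes q T : q * (T.+1 * 2 ^ T) * q <= ncodes q T.
Proof.
rewrite /ncodes -[X in X <= _]muln1; apply: leq_mul; last by rewrite muln_gt0 expn_gt0.
by apply: leq_mul; [apply: leq_mul|].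
Qed.

Lemma io_LZ_deep_Sdeep : io_LZ_deep Sdeep.
Proof.
exists (/ 4)%R; split; first lra.
move=> C C_il N; have [i N_le level_i] := level_infinitely_often #|fst_state C| N.
set p := size (stage i); set k := level i in level_i.
exists (p + size (rich_part p k)); split; first by have := size_stage_geq i; lia.
rewrite prefix_rich; apply: gap_at_rich_end; last exact: LZ_rich_part_small.
have := ilfst_out_repeated_blocks (stage i) (reps p k * reps p k) (block_cost k) C_il (words_uniq (word_len k)).
rewrite size_words; apply: rich_part_incompressible.
by rewrite level_i card_codes_leq_ncodes.
Qed.

(* Two states: [q1 --0/w--> q1], [q1 --1/--> q2] and [q2 --b/b--> q1]. *)
Definition copier_ns : seq nat := [:: 2; 1; 2; 2].
Definition copier_ns' (w : seq bool) : seq nat := [:: num_of_bstring w; 1; 2; 3].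
Definition pair_code (u : seq bool) : seq bool := flatten [seq [:: true; b] | b <- u].

Lemma size_pair_code u : size (pair_code u) = (size u).*2.
Proof. by elim: u => [|b u IH] //=; rewrite IH; lia. Qed.

Lemma copier_run w u r :
  drun 2 copier_ns (copier_ns' w) 1 (pair_code u ++ nseq r false) = u ++ flatten (nseq r w).
Proof.
elim: u => [|b u IH] /=; last by rewrite -IH /dnu /dnext /=; case: b.
by elim: r => [|r IH] //=; rewrite IH /dnu /= bstring_num_of_bstring.
Qed.

Lemma copier_witness w u r :
  Dwitness (26 + (size w).*2) (u ++ flatten (nseq r w)) (pair_code u ++ nseq r false).
Proof.
exists 2, 1, copier_ns, (copier_ns' w); split; first by split; rewrite //= num_of_bstring_gt0.
split; last exact: copier_run.
by rewrite /desc /desc_pi /= !size_cat /= !size_diamond bstring_num_of_bstring /=; lia.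
Qed.

Lemma FS_deep_Sdeep : FS_deep Sdeep.
Proof.
exists (/ 4)%R; split; first lra.
move=> k; exists (26 + (size (all_words k)).*2) => N.
have [i N_le level_i] := level_infinitely_often k N; subst k.
set p := size (stage i); set k := level i; set r := reps p k * reps p k.
exists (p + size (rich_part p k)); split; first by have := size_stage_geq i; lia.
rewrite prefix_rich.
have [a Da] := Dk_exists k (stage i ++ rich_part p k).
have [b Db] := Dk_exists (26 + (size (all_words k)).*2) (stage i ++ rich_part p k).
exists a, b; split => //; split => //.
have copier := copier_witness (all_words k) (stage i) r.
case: b Db => [b [_ b_min] | no_b]; last by exfalso; apply: no_b; exists (pair_code (stage i) ++ nseq r false).
case: a Da => [a [[y [wy <-]] _] | //].
apply: gap_at_rich_end.
  have := Dwitness_repeated_blocks (block_cost k) wy (erefl _) (words_uniq (word_len k)).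
  by rewrite size_words; apply: rich_part_incompressible.
apply: leq_trans (_ : 8 * (2 * p + r) <= _).
  by have := b_min _ copier; rewrite size_cat size_pair_code size_nseq; lia.
have := ltn_reps p k; have := size_all_words k; have := word_len_ge k.
rewrite size_rich_part -/r; have : reps p k <= r by rewrite leq_pmull ?reps_gt0.
set L := size (all_words k); set l := word_len k => R_le l_ge L_eq p_lt.
have : l <= L by rewrite L_eq leq_pmulr // expn_gt0.
nia.
Qed.

Lemma zrun_end_of_phase K i : K.+1 * K.+2 <= i.+1 ->
  K.+1 * size (fst_out (zrun_fst K) (stage i.+1)) <= 2 * size (stage i.+1).
Proof.
move=> i_ge; set p := size (stage i) + size (rich_part (size (stage i)) (level i)).
have size_end : size (stage i.+1) = i.+1 * p.
  by rewrite stageS size_cat /phase size_cat size_nseq /p; lia.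
have ones : count idfun (stage i.+1) <= p.
  rewrite stageS /phase catA count_cat (_ : count _ (nseq _ false) = 0).
    by rewrite addn0 /p -size_cat count_size.
  by elim: (_ * _).
apply: leq_trans (size_zrun_fst K _) _; rewrite size_end.
by have := leq_mul i_ge ones; nia.
Qed.

Lemma INR_gap_lt c l n K al : K.+1 * c <= 2 * n -> (2 < INR K.+1 * al)%R -> 0 < n ->
  (INR c - INR l < al * INR n)%R.
Proof.
move=> /leP/le_INR; rewrite -!multE !mult_INR => c_le K_big /ltP/lt_0_INR n_gt0.
have K_gt0 : (0 < INR K.+1)%R by apply/lt_0_INR/ltP.
have two : INR 2 = 2%R by simpl; lra.
have := pos_INR l; rewrite two in c_le; nra.
Qed.

Lemma not_LZ_deep_Sdeep : ~ LZ_deep Sdeep.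
Proof.
move=> [al [al_gt0 deep]].
have [K K_big] : exists K, (2 < INR K.+1 * al)%R.
  have [K K_gt] := INR_unbounded (2 / al); exists K; rewrite S_INR.
  have : (2 / al * al = 2)%R by field; lra.
  nra.
have [N gapN] := deep _ (@zrun_fst_ILFST K).
set i := maxn N (K.+1 * K.+2).
have n_ge : N <= size (stage i.+1) by have := size_stage_geq i.+1; lia.
have := gapN _ n_ge; rewrite prefix_stageS; apply/Rlt_not_ge/INR_gap_lt.
- by apply: zrun_end_of_phase; lia.
- exact: K_big.
- by have := size_stage_geq i.+1; lia.
Qed.

Theorem mainTheorem9 :
  exists S : binseq, io_LZ_deep S /\ FS_deep S /\ ~ LZ_deep S.
Proof.
exists Sdeep; split; [exact: io_LZ_deep_Sdeep | split; [exact: FS_deep_Sdeep | exact: not_LZ_deep_Sdeep]].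
Qed.
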